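(* For any dimension $d$ and any $d$-dimensional freezing cellular automaton $F$, there is a $d$-dimensional freezing cellular automaton $G$ with neighborhood $\mathrm{VN}_d$ that simulates $F$.
   Context: A $d$-dimensional cellular automaton (CA) is $F=(d,Q,N,f)$ with $Q$ finite, $N\subset\mathbb{Z}^d$ finite, $f:Q^N\to Q$, global map $F(c)_z=f(c|_{z+N})$. A CA is freezing if there is a partial order $\preceq$ on $Q$ with $F(c)_z\preceq c_z$ for all configurations $c$ and cells $z$. $\mathrm{VN}_d=\{\vec 0,\pm e_1,\dots,\pm e_d\}$. Simulation: $F'$ (states $Q_{F'}$) simulates $G'$ (states $Q_{G'}$), both of dimension $d$, if there exist $T>0$, a rectangular block $B\subseteq\mathbb{Z}^d$ with size-vector $b$, a finite $C\subset\mathbb{Z}^d$ with $\vec 0\in C$, and $\phi:Q_{G'}^C\to Q_{F'}^B$ such that $\bar\phi(c)_{bz+r}=\phi(c|_{z+C})_r$ ($z\in\mathbb{Z}^d,r\in B$, $bz$ componentwise) defines an injective map $\bar\phi$ with $\bar\phi(G'(c))=F'^T(\bar\phi(c))$ for all configurations $c$. *)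

From HB Require Import structures.
From mathcomp Require Import all_boot all_order all_algebra.
From mathcomp Require Import finmap.
Set Implicit Arguments.
Unset Strict Implicit.
Unset Printing Implicit Defensive.
Import Order.TTheory GRing.Theory Num.Theory.
Local Open Scope ring_scope.
Local Open Scope fset_scope.

Definition cell (d : nat) := {ffun 'I_d -> int}.

Definition config (d : nat) (Q : Type) := cell d -> Q.

Record CA (d : nat) := MkCA {
  ca_Q : finType;
  ca_N : {fset cell d};
  ca_f : {ffun ca_N -> ca_Q} -> ca_Q }.

Definition restr (d : nat) (Q : Type) (A : {fset cell d}) (c : config d Q)
  (z : cell d) : {ffun A -> Q} := [ffun n : A => c (z + val n)%R].

Definition global (d : nat) (F : CA d) (c : config d (ca_Q F)) : config d (ca_Q F) :=
  fun z => ca_f (restr (ca_N F) c z).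
Arguments global {d} F c z.

Definition partial_order (Q : Type) (R : Q -> Q -> Prop) : Prop :=
  (forall x, R x x) /\ (forall x y, R x y -> R y x -> x = y) /\
  (forall x y z, R x y -> R y z -> R x z).

Definition freezing (d : nat) (F : CA d) : Prop :=
  exists R : ca_Q F -> ca_Q F -> Prop, partial_order R /\
    forall (c : config d (ca_Q F)) (z : cell d), R (global F c z) (c z).

Definition unitv (d : nat) (i : 'I_d) : cell d := [ffun j => (i == j)%:Z].

Definition VN (d : nat) : {fset cell d} :=
  [fset (0 : cell d)] `|` [fset unitv i | i : 'I_d] `|` [fset - unitv i | i : 'I_d].

(* Block decomposition: every x in Z^d is uniquely b z + r with 0 <= r_i < b_i
   (for b with positive entries); z = blockidx, r = blockoff. *)
Definition blockidx (d : nat) (b x : cell d) : cell d := [ffun i => (x i %/ b i)%Z].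
Definition blockoff (d : nat) (b x : cell d) : cell d := [ffun i => (x i %% b i)%Z].
Definition cmul (d : nat) (b z : cell d) : cell d := [ffun i => b i * z i].

Definition in_block (d : nat) (b r : cell d) : Prop := forall i, 0 <= r i < b i.

(* bar phi (c)_{b z + r} = phi (c|_{z+C})_r, for z in Z^d and r in B.
   phi : Q_G^C -> Q_F^B is represented by a function whose values are only
   read at r in B. *)
Definition barphi (d : nat) (QG QF : Type) (b : cell d) (C : {fset cell d})
  (phi : {ffun C -> QG} -> cell d -> QF) (c : config d QG) : config d QF :=
  fun x => phi (restr C c (blockidx b x)) (blockoff b x).
Arguments barphi {d QG QF} b {C} phi c x.

Definition simulates (d : nat) (F' G' : CA d) : Prop :=
  exists (T : nat) (b : cell d) (C : {fset cell d})
         (phi : {ffun C -> ca_Q G'} -> cell d -> ca_Q F'),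
    (0 < T)%N /\ (forall i, 0 < b i) /\ (0 : cell d) \in C /\
    injective (barphi b phi) /\
    forall c : config d (ca_Q G'),
      barphi b phi (global G' c) = iter T (global F') (barphi b phi c).

From mathcomp Require Import all_boot all_order all_algebra.
From mathcomp Require Import finmap.
From mathcomp Require Import zify.
From Stdlib Require Import ClassicalEpsilon FunctionalExtensionality.
(* The simulator G spends [radius] of its steps on one step of F, where [radius]
   exceeds the l1-length of every vector of F's neighbourhood. Each cell of G stores
   the pattern of F's configuration on the l1-ball [window] around it. In the first
   step every cell whose F-state is about to change starts a wave announcing its new
   state; a wave travels one cell per step through VN_d, so after [radius] steps
   every cell knows all the changes inside its window and updates its pattern.
   G is freezing because a cell only ever moves to a state of strictly smaller
   [rank]: while a wave spreads its clock decreases, and the final update lowers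
   the total height of the pattern in F's order, as F is freezing. *)

Set Implicit Arguments.
Unset Strict Implicit.
Unset Printing Implicit Defensive.
Import Order.POrderTheory GRing.Theory Num.Theory.
Local Open Scope fset_scope.

Section Norm1.
Variable d : nat.
Implicit Types (y w : cell d) (i : 'I_d).

Definition norm1 y : nat := (\sum_(i < d) absz (y i))%N.

Lemma leq_abs_norm1 y i : (absz (y i) <= norm1 y)%N.
Proof. by rewrite /norm1 (bigD1 i) //= leq_addr. Qed.

Lemma norm1_eq0 y : (norm1 y == 0%N) = (y == 0%R).
Proof.
apply/eqP/eqP => [y0|->]; last by rewrite /norm1 big1 // => i _; rewrite ffunE.
apply/ffunP => i; rewrite ffunE.
by have := leq_abs_norm1 y i; rewrite y0 leqn0 absz_eq0 => /eqP.
Qed.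

Lemma norm1_0 : norm1 0%R = 0%N.
Proof. by apply/eqP; rewrite norm1_eq0. Qed.

Lemma norm1D y w : (norm1 (y + w)%R <= norm1 y + norm1 w)%N.
Proof.
rewrite /norm1 -big_split /=; apply: leq_sum => i _; rewrite ffunE.
by rewrite -lez_nat PoszD !abszE ler_normD.
Qed.

Lemma norm1N y : norm1 (- y)%R = norm1 y.
Proof. by apply: eq_bigr => i _; rewrite ffunE abszN. Qed.

Lemma norm1_unitv i : norm1 (unitv i) = 1%N.
Proof.
rewrite /norm1 (bigD1 i) //= big1 ?ffunE ?eqxx // => j /negbTE ji.
by rewrite ffunE eq_sym ji.
Qed.

Lemma norm1_update y w i : (forall j, j != i -> w j = y j) ->
  (norm1 w + absz (y i) = norm1 y + absz (w i))%N.
Proof.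
move=> wy; rewrite /norm1 (bigD1 i) //= [in RHS](bigD1 i) //=.
rewrite (eq_bigr (fun j => absz (y j))); last by move=> j /wy ->.
by rewrite addnAC [in RHS]addnAC [(absz (w i) + _)%N]addnC.
Qed.

Lemma VN_norm1 v : v \in VN d -> (norm1 v <= 1)%N.
Proof.
rewrite !inE => /orP[/orP[/eqP->|/imfsetP[i _ ->]]|/imfsetP[i _ ->]].
- by rewrite norm1_0.
- by rewrite norm1_unitv.
- by rewrite norm1N norm1_unitv.
Qed.

Lemma zero_in_VN : (0%R : cell d) \in VN d.
Proof. by rewrite !inE eqxx. Qed.

Lemma unitv_in_VN i : unitv i \in VN d.
Proof. by rewrite !inE; apply/orP; left; apply/orP; right; apply: in_imfset. Qed.

Lemma opp_unitv_in_VN i : (- unitv i)%R \in VN d.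
Proof. by rewrite !inE; apply/orP; right; apply: in_imfset. Qed.

Lemma VN_norm1_pred y : y != 0%R ->
  exists2 v, v \in VN d & norm1 (y - v)%R = (norm1 y).-1.
Proof.
move=> y_neq0; have [i yi_neq0] : exists i, y i != 0%R.
  apply/existsP; apply: contraNT y_neq0 => /existsPn y0.
  by apply/eqP/ffunP => i; rewrite ffunE; apply/eqP/negPn/y0.
have [yi_gt0|yi_le0] := ltrP 0%R (y i).
  exists (unitv i); first exact: unitv_in_VN.
  have E : (norm1 (y - unitv i)%R + absz (y i) =
            norm1 y + absz ((y - unitv i)%R i))%N.
    by apply: norm1_update => j ji; rewrite !ffunE eq_sym (negbTE ji) subr0.
  by rewrite !ffunE eqxx /= in E; lia.
exists (- unitv i)%R; first exact: opp_unitv_in_VN.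
have yi_lt0 : (y i < 0)%R by rewrite lt_neqAle yi_neq0.
have E : (norm1 (y - - unitv i)%R + absz (y i) =
          norm1 y + absz ((y - - unitv i)%R i))%N.
  by apply: norm1_update => j ji; rewrite !ffunE eq_sym (negbTE ji) opprK addr0.
by rewrite !ffunE eqxx opprK /= in E; lia.
Qed.

Lemma VN_ball_succ y t :
  [exists v : VN d, (norm1 (y - val v)%R <= t)%N] = (norm1 y <= t.+1)%N.
Proof.
apply/existsP/idP => [[v yv_le]|y_le].
  have := norm1D (y - val v)%R (val v); rewrite subrK => /leq_trans; apply.
  by rewrite -addn1 (leq_add yv_le (VN_norm1 (valP v))).
have [y_small|y_big] := leqP (norm1 y) t.
  by exists [` zero_in_VN]; rewrite /= subr0.
have [|v v_VN yv] := VN_norm1_pred (y := y).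
  by apply: contraTneq y_big => ->; rewrite norm1_0.
by exists [` v_VN]; rewrite /= yv -ltnS prednK // (leq_ltn_trans _ y_big).
Qed.
End Norm1.

Section Ball.
Variables (d r : nat).

Definition ball_point (v : {ffun 'I_d -> 'I_(r.*2.+1)}) : cell d :=
  [ffun i => ((v i : nat)%:Z - r%:Z)%R].

Definition ball : {fset cell d} :=
  [fset ball_point v | v : {ffun 'I_d -> 'I_(r.*2.+1)} & (norm1 (ball_point v) <= r)%N].

Lemma in_ball (y : cell d) : (y \in ball) = (norm1 y <= r)%N.
Proof.
apply/imfsetP/idP => [[v /= v_le ->] //|y_le].
pose v := [ffun i => inord (absz (y i + r%:Z)%R) : 'I_(r.*2.+1)].
suff yv : ball_point v = y by exists v; rewrite // inE yv.
apply/ffunP => i; have yi_le := leq_trans (leq_abs_norm1 y i) y_le.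
by rewrite !ffunE inordK; move: (y i) yi_le => a ?; lia.
Qed.
End Ball.

Definition extend (T : choiceType) (A : {fset T}) (X : Type) (g : {ffun A -> X}) (a : X)
    (z : T) : X :=
  if insub z is Some w then g w else a.

Lemma extendE (T : choiceType) (A : {fset T}) (X : Type) (g : {ffun A -> X}) a (w : A) :
  extend g a (val w) = g w.
Proof. by rewrite /extend valK. Qed.

Lemma extend_notin (T : choiceType) (A : {fset T}) (X : Type) (g : {ffun A -> X}) a z :
  z \notin A -> extend g a z = a.
Proof. by move=> zA; rewrite /extend insubN. Qed.

Section Height.
Variables (Q : finType) (R : Q -> Q -> Prop).
Hypothesis R_order : partial_order R.

Definition below (a : Q) : pred Q :=
  fun x => if excluded_middle_informative (R x a) then true else false.

Lemma belowP a x : reflect (R x a) (below a x).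
Proof. by rewrite /below; case: excluded_middle_informative => Rxa; constructor. Qed.

Definition height (a : Q) : nat := #|below a|.

Lemma below_sub a b : R a b -> {subset below a <= below b}.
Proof.
case: R_order => _ [_ R_trans] Rab x /belowP Rxa; apply/belowP; exact: R_trans Rab.
Qed.

Lemma height_le a b : R a b -> (height a <= height b)%N.
Proof. by move=> Rab; apply/subset_leq_card/subsetP/below_sub. Qed.

Lemma height_lt a b : R a b -> a != b -> (height a < height b)%N.
Proof.
case: R_order => _ [R_anti _] Rab ab; apply/proper_card/properP; split.
  exact/subsetP/below_sub.
exists b; first by apply/belowP; case: R_order.
by apply/belowP => Rba; move/eqP: ab; apply; apply: R_anti.
Qed.

End Height.

Lemma freezing_of_rank d (G : CA d) (rank : ca_Q G -> nat) :
  (forall c z, global G c z = c z \/ (rank (global G c z) < rank (c z))%N) -> freezing G.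
Proof.
move=> rank_dec; exists (fun s' s => s' = s \/ (rank s' < rank s)%N); split.
  split; first by left.
  split; first by move=> s s' [->|lt1] [|lt2] //; move: lt1 lt2; lia.
  by move=> s1 s2 s3 [->|lt1] [<-|lt2]; [left|right..] => //; apply: ltn_trans lt1 lt2.
exact: rank_dec.
Qed.

Section Simulator.
Variables (d : nat) (F : CA d).
Local Notation Q := (ca_Q F).

(* The [.+1] keeps the simulation period positive when F has no proper neighbour. *)
Definition radius : nat := (\max_(n : ca_N F) norm1 (val n)).+1.

Definition window : {fset cell d} := ball d radius.

Lemma window0 : (0%R : cell d) \in window.
Proof. by rewrite in_ball norm1_0. Qed.

Lemma window_nbr (n : ca_N F) : val n \in window.
Proof. by rewrite in_ball ltnW // ltnS (leq_bigmax n). Qed.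

Definition origin : window := [` window0].

Local Notation pattern := {ffun window -> Q}.
Local Notation news := {ffun window -> option Q}.
Local Notation state := (pattern * option ('I_radius * news))%type.

(* The default value of [extend] is never read: the neighbourhood lies in the window. *)
Definition center_update (K : pattern) : Q :=
  ca_f [ffun n : ca_N F => extend K (K origin) (val n)].

Definition announce (q : Q) : news := [ffun y => if val y == 0%R then Some q else None].

Definition initial_news (K : pattern) : option ('I_radius * news) :=
  if center_update K != K origin then Some (ord0, announce (center_update K)) else None.

Definition encode (K : pattern) : state := (K, initial_news K).

Definition news_of (s : state) : news := if s.2 is Some (_, P) then P else [ffun => None].

Definition age (s : state) : nat := if s.2 is Some (a, _) then val a else 0%N.

Definition self : VN d := [` zero_in_VN d].

Lemma restr_self (X : Type) (c : config d X) x : restr (VN d) c x self = c x.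
Proof. by rewrite ffunE /= addr0. Qed.

Implicit Type ns : {ffun VN d -> state}.

Definition received ns (v : VN d) (y : cell d) : option Q :=
  extend (news_of (ns v)) None (y - val v)%R.

Definition gathered ns : news :=
  [ffun y => if [pick v | received ns v (val y) != None] is Some v
             then received ns v (val y) else None].

Definition neighbour_age ns : nat :=
  if [pick v | (ns v).2 != None] is Some v then age (ns v) else 0%N.

Definition proposal ns : state :=
  if [exists y, gathered ns y != None] then
    if (neighbour_age ns).+1 == radius then
      encode [ffun y => odflt ((ns self).1 y) (gathered ns y)]
    else ((ns self).1, Some (inord (neighbour_age ns).+1, gathered ns))
  else ns self.

Variable R : Q -> Q -> Prop.

Definition clock (o : option ('I_radius * news)) : nat :=
  if o is Some (a, _) then (radius - a)%N else radius.+1.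

Definition weight (K : pattern) : nat := (\sum_(y : window) height R (K y))%N.

(* Lexicographic in (weight, clock), since the clock is at most [radius.+1]. *)
Definition rank (s : state) : nat :=
  (weight s.1 * radius.+2 + clock s.2)%N.

Definition rule ns : state :=
  if (rank (proposal ns) < rank (ns self))%N then proposal ns else ns self.

Definition simulator : CA d := MkCA rule.

Lemma simulator_freezing : freezing simulator.
Proof.
apply: (@freezing_of_rank _ simulator rank) => c z; rewrite /global /= /rule.
by rewrite restr_self; case: ifP; [right|left].
Qed.

Lemma rule_proposal ns :
  proposal ns = ns self \/ (rank (proposal ns) < rank (ns self))%N -> rule ns = proposal ns.
Proof. by rewrite /rule => -[->|->]; rewrite ?if_same. Qed.

Lemma gathered_news ns y : gathered ns y != None -> [exists v, (ns v).2 != None].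
Proof.
rewrite ffunE; case: pickP => // v _; rewrite /received /news_of.
case nsv: (ns v).2 => [[a P]|]; first by move=> _; apply/existsP; exists v; rewrite nsv.
by rewrite /extend; case: insub => [w|]; rewrite ?ffunE.
Qed.

Hypothesis R_order : partial_order R.
Hypothesis F_freezing : forall (c : config d Q) z, R (global F c z) (c z).

Implicit Types (c : config d Q) (t : nat) (x : cell d).

Definition changed c (z : cell d) : bool := global F c z != c z.

Definition changes_within c t x : news :=
  [ffun y => if (norm1 (val y) <= t)%N && changed c (x + val y)%R
             then Some (global F c (x + val y)%R) else None].

Definition active c t x : bool := [exists y, changes_within c t x y != None].

Definition sim_state c t x : state :=
  (restr window c x, if active c t x then Some (inord t, changes_within c t x) else None).

Definition next_sim_state c t x : state :=
  if (t.+1 < radius)%N then sim_state c t.+1 x else encode (restr window (global F c) x).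

Lemma center_update_restr c x : center_update (restr window c x) = global F c x.
Proof.
rewrite /center_update /global; congr ca_f; apply/ffunP => n; rewrite !ffunE.
by rewrite -[val n]/(val [` window_nbr n]) extendE ffunE.
Qed.

Lemma news_of_sim_state c t x : news_of (sim_state c t x) = changes_within c t x.
Proof.
rewrite /news_of /=; case: ifP => // /negbT /existsPn quiet.
by apply/ffunP => y; rewrite ffunE; move/negPn/eqP: (quiet y).
Qed.

Lemma received_sim_state c t x v (y : cell d) : (t <= radius)%N ->
  received (restr (VN d) (sim_state c t) x) v y =
  if (norm1 (y - val v)%R <= t)%N && changed c (x + y)%R
  then Some (global F c (x + y)%R) else None.
Proof.
move=> t_le; rewrite /received ffunE news_of_sim_state.
have xvy : (x + val v + (y - val v) = x + y)%R by rewrite [(y - _)%R]addrC addrA addrK.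
case: (boolP ((y - val v)%R \in window)) => yv_in.
  by rewrite -[(y - val v)%R]/(val [` yv_in]) extendE ffunE /= xvy.
rewrite extend_notin //; move: yv_in; rewrite in_ball => /negbTE yv_far.
by case: leqP => //= yv_le; rewrite (leq_trans yv_le t_le) in yv_far.
Qed.

Lemma gathered_sim_state c t x : (t <= radius)%N ->
  gathered (restr (VN d) (sim_state c t) x) = changes_within c t.+1 x.
Proof.
move=> t_le; apply/ffunP => y; rewrite !ffunE -VN_ball_succ.
case: pickP => [v|silent]; rewrite ?received_sim_state //.
  case: ifP => //= /andP[yv_le ->] _.
  by have -> : [exists v : VN d, (norm1 (val y - val v)%R <= t)%N] by apply/existsP; exists v.
case: ifP => // /andP[/existsP[v yv_le] yc].
by move: (silent v); rewrite received_sim_state // yv_le yc.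
Qed.

Lemma active_le c t t' x : (t <= t')%N -> active c t x -> active c t' x.
Proof.
move=> tt' /existsP[y]; rewrite ffunE; case: ifP => //= /andP[y_le yc] _.
by apply/existsP; exists y; rewrite ffunE (leq_trans y_le tt') yc.
Qed.

Lemma neighbour_age_sim_state c t x : (t < radius)%N -> active c t.+1 x ->
  neighbour_age (restr (VN d) (sim_state c t) x) = t.
Proof.
move=> t_lt act; rewrite /neighbour_age; case: pickP => [v|silent].
  by rewrite ffunE /age /sim_state /=; case: ifP => //= _ _; rewrite inordK.
move: act; rewrite /active -(gathered_sim_state _ _ (ltnW t_lt)).
by move=> /existsP[y /gathered_news /existsP[v]]; rewrite silent.
Qed.

Lemma apply_changes c x :
  [ffun y => odflt (restr window c x y) (changes_within c radius x y)] =
  restr window (global F c) x.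
Proof.
apply/ffunP => y; rewrite !ffunE -in_ball (valP y) /=.
by case: ifP => //= /negbFE /eqP ->.
Qed.

Lemma sim_state_inactive c t x : ~~ active c t.+1 x -> sim_state c t.+1 x = sim_state c t x.
Proof.
move=> quiet; rewrite /sim_state (negbTE quiet).
by case: ifP => // /(active_le (leqnSn t)) act; rewrite act in quiet.
Qed.

Lemma restr_origin c x : restr window c x origin = c x.
Proof. by rewrite ffunE /= addr0. Qed.

Lemma inactive_restr c x :
  ~~ active c radius x -> restr window (global F c) x = restr window c x.
Proof.
move=> /existsPn quiet; rewrite -apply_changes; apply/ffunP => y.
by rewrite ffunE; move/negPn/eqP: (quiet y) => ->.
Qed.

Lemma encode_inactive c t x : (t <= radius)%N -> ~~ active c radius x ->
  encode (restr window (global F c) x) = sim_state c t x.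
Proof.
move=> t_le quiet; have quiet_t : ~~ active c t x by apply: contra quiet; apply: active_le.
have center := congr1 (fun K : pattern => K origin) (inactive_restr quiet).
rewrite /= !restr_origin in center.
rewrite /encode /sim_state (negbTE quiet_t) inactive_restr // /initial_news.
by rewrite center_update_restr restr_origin center eqxx.
Qed.

Lemma weight_lt c x : active c radius x ->
  (weight (restr window (global F c) x) < weight (restr window c x))%N.
Proof.
move=> /existsP[y0]; rewrite ffunE; case: ifP => //= /andP[_ y0c] _.
rewrite /weight (bigD1 y0) //= [X in (_ < X)%N](bigD1 y0) //= -addSn.
apply: leq_add; first by rewrite !ffunE; apply: height_lt.
by apply: leq_sum => y _; rewrite !ffunE; apply: height_le.
Qed.

Lemma proposal_sim_state c t x : (t < radius)%N ->
  proposal (restr (VN d) (sim_state c t) x) = next_sim_state c t x.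
Proof.
move=> t_lt; rewrite /proposal restr_self (gathered_sim_state _ _ (ltnW t_lt)).
rewrite -/(active c t.+1 x) /next_sim_state; case: (boolP (active c t.+1 x)) => act.
  rewrite neighbour_age_sim_state //; case: eqP => [t1_eq|t1_neq].
    by rewrite t1_eq ltnn /= apply_changes.
  have t1_lt : (t.+1 < radius)%N by rewrite ltn_neqAle t_lt andbT; apply/eqP.
  by rewrite t1_lt /sim_state act.
case: ltnP => [_|radius_le]; first by rewrite sim_state_inactive.
have t1_eq : t.+1 = radius by apply/eqP; rewrite eqn_leq t_lt.
have quiet : ~~ active c radius x by rewrite -t1_eq.
by rewrite (encode_inactive (ltnW t_lt) quiet).
Qed.

Lemma clock_le (o : option ('I_radius * news)) : (clock o <= radius.+1)%N.
Proof. by case: o => [[a P]|] //=; rewrite leqW // leq_subr. Qed.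

Lemma rank_next_sim_state c t x : (t < radius)%N ->
  next_sim_state c t x = sim_state c t x \/
  (rank (next_sim_state c t x) < rank (sim_state c t x))%N.
Proof.
move=> t_lt; rewrite /next_sim_state; case: ltnP => [t1_lt|_].
  case: (boolP (active c t.+1 x)) => act; last by left; rewrite sim_state_inactive.
  right; rewrite /rank ltn_add2l /sim_state act /= inordK //.
  by case: ifP => _ /=; [rewrite inordK //; lia | lia].
case: (boolP (active c radius x)) => act; last by left; rewrite (encode_inactive (ltnW t_lt) act).
right; apply: (@leq_trans ((weight (restr window (global F c) x)).+1 * radius.+2)).
  by rewrite mulSn addnC ltn_add2l ltnS clock_le.
by apply: leq_trans (leq_addr _ _); rewrite leq_mul2r /= weight_lt.
Qed.

Lemma step_sim_state c t : (t < radius)%N ->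
  global simulator (sim_state c t) = next_sim_state c t.
Proof.
move=> t_lt; apply: functional_extensionality => x; rewrite /global /= rule_proposal.
  by rewrite proposal_sim_state.
by rewrite restr_self proposal_sim_state //; apply: rank_next_sim_state.
Qed.

Lemma encode_sim_state c x : encode (restr window c x) = sim_state c 0 x.
Proof.
have at_origin (y : window) : (norm1 (val y) <= 0)%N = (val y == 0%R).
  by rewrite leqn0 norm1_eq0.
have act : active c 0 x = changed c x.
  apply/existsP/idP => [[y]|xc]; last by exists origin; rewrite ffunE /= norm1_0 addr0 xc.
  by rewrite ffunE at_origin; case: (val y =P 0%R) => [->|] //=; rewrite addr0; case: ifP.
rewrite /encode /sim_state /initial_news center_update_restr restr_origin act.
congr pair; rewrite -/(changed c x); case: ifP => // xc.
congr (Some (_, _)); first by apply: val_inj; rewrite /= inordK.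
by apply/ffunP => y; rewrite !ffunE at_origin; case: (val y =P 0%R) => [->|] //=; rewrite addr0 xc.
Qed.

Lemma iter_sim_state c t : (t < radius)%N ->
  iter t (global simulator) (sim_state c 0) = sim_state c t.
Proof.
elim: t => [//|t IH] t1_lt; rewrite iterS IH ?(ltnW t1_lt) // step_sim_state ?(ltnW t1_lt) //.
by rewrite /next_sim_state t1_lt.
Qed.

Lemma simulator_period c :
  iter radius (global simulator) (fun x => encode (restr window c x)) =
  (fun x => encode (restr window (global F c) x)).
Proof.
have -> : (fun x => encode (restr window c x)) = sim_state c 0.
  by apply: functional_extensionality => x; rewrite encode_sim_state.
rewrite -[radius]/(radius.-1.+1) iterS iter_sim_state // step_sim_state //.
by rewrite /next_sim_state ltnn.
Qed.

Lemma encode_restr_inj :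
  injective (fun (c : config d Q) x => encode (restr window c x)).
Proof.
move=> c1 c2 c12; apply: functional_extensionality => x.
by have := congr1 (fun e : cell d -> state => (e x).1 origin) c12; rewrite /= !restr_origin.
Qed.

End Simulator.

Definition ones d : cell d := [ffun => 1%R].

Lemma barphi_ones d (QG QF : Type) (C : {fset cell d})
    (phi : {ffun C -> QG} -> cell d -> QF) (c : config d QG) x :
  barphi (ones d) phi c x = phi (restr C c x) (blockoff (ones d) x).
Proof. by congr phi; congr restr; apply/ffunP => i; rewrite !ffunE divz1. Qed.

Theorem lemma5 (d : nat) (F : CA d) :
  freezing F ->
  exists G : CA d, freezing G /\ ca_N G = VN d /\ simulates G F.
Proof.
move=> [R [R_order F_freezing]].
exists (simulator R); split; first exact: simulator_freezing.
split; first by [].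
exists (radius F), (ones d), (window F), (fun K _ => encode K).
have barphiE c : barphi (ones d) (fun K _ => encode K) c = fun x => encode (restr (window F) c x).
  by apply: functional_extensionality => x; rewrite barphi_ones.
split; first by [].
split; first by move=> i; rewrite ffunE.
split; first exact: window0.
split; first by move=> c1 c2; rewrite !barphiE => /encode_restr_inj.
by move=> c; rewrite !barphiE simulator_period.
Qed.
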